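(* Let $\mathfrak{n}$ be a finite dimensional nilpotent Lie algebra over a field of characteristic zero, and let $d\ge 1$. Suppose $\mathfrak{n}=\bigoplus_{\alpha\in\mathbb{Z}_+^d}\mathfrak{n}_\alpha$ is a $\mathbb{Z}_+^d$-grading of $\mathfrak{n}$ with associated polynomial $p$. Then there exist a positive integer $k$ and a grading $\mathfrak{n}=\mathfrak{n}'_1\oplus\mathfrak{n}'_2\oplus\cdots\oplus\mathfrak{n}'_k$ (i.e. a $\mathbb{Z}_+$-grading with $\mathfrak{n}'_j=0$ for $j>k$) whose associated polynomial $p'$ satisfies $L(p')=L(p)$.
   Context: $\mathbb{Z}_+^d$ denotes the set of nonzero $d$-tuples $\alpha=(\alpha_1,\dots,\alpha_d)$ of nonnegative integers. A $\mathbb{Z}_+^d$-grading of a Lie algebra $\mathfrak{n}$ is a vector space decomposition $\mathfrak{n}=\bigoplus_{\alpha\in\mathbb{Z}_+^d}\mathfrak{n}_\alpha$ with $[\mathfrak{n}_\alpha,\mathfrak{n}_\beta]\subset\mathfrak{n}_{\alpha+\beta}$ for all $\alpha,\beta$. Its associated polynomial is $p(x_1,\dots,x_d)=\prod_{\alpha\in\mathbb{Z}_+^d}(1-x_1^{\alpha_1}\cdots x_d^{\alpha_d})^{\dim\mathfrak{n}_\alpha}=\sum_\alpha a_\alpha x_1^{\alpha_1}\cdots x_d^{\alpha_d}\in\mathbb{Z}[x_1,\dots,x_d]$, and the length of $p$ is $L(p)=\sum_\alpha|a_\alpha|$, the sum of the absolute values of its coefficients. A grading $\mathfrak{n}=\mathfrak{n}'_1\oplus\cdots\oplus\mathfrak{n}'_k$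 means $[\mathfrak{n}'_i,\mathfrak{n}'_j]\subset\mathfrak{n}'_{i+j}$ (with $\mathfrak{n}'_m=0$ for $m>k$), i.e. the case $d=1$, with associated polynomial $p'(x)=\prod_{i=1}^k(1-x^i)^{\dim\mathfrak{n}'_i}$. *)

From HB Require Import structures.
From mathcomp Require Import all_boot all_order all_algebra.
From mathcomp Require Import mpoly.
Set Implicit Arguments. Unset Strict Implicit. Unset Printing Implicit Defensive.
Import Order.TTheory GRing.Theory Num.Theory.
Local Open Scope ring_scope.

Definition is_lie_bracket (F : fieldType) (V : vectType F) (br : V -> V -> V) : Prop :=
  [/\ (forall (a : F) (x y z : V), br (a *: x + y) z = a *: br x z + br y z),
      (forall (a : F) (x y z : V), br x (a *: y + z) = a *: br x y + br x z),
      (forall x : V, br x x = 0) &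
      (forall x y z : V, br x (br y z) + br y (br z x) + br z (br x y) = 0)].

Definition lie_nilpotent (F : fieldType) (V : vectType F) (br : V -> V -> V) : Prop :=
  exists n : nat, forall (xs : seq V) (y : V), size xs = n -> foldr br y xs = 0.

(* Z_+^d-grading: G a = n_a for a monomial a (= d-tuple of naturals);
   S is a finite list containing every a with G a <> 0, none equal to 0. *)
Definition is_Zd_grading (F : fieldType) (V : vectType F) (br : V -> V -> V)
    (d : nat) (G : 'X_{1..d} -> {vspace V}) (S : seq 'X_{1..d}) : Prop :=
  [/\ uniq S && (0%MM \notin S),
      (forall a, a \notin S -> G a = 0%VS),
      (\sum_(a <- S) G a)%VS = fullv,
      directv (\sum_(a <- S) G a) &
      (forall a b (x y : V), x \in G a -> y \in G b -> br x y \in G (a + b)%MM)].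

Definition grading_poly (F : fieldType) (V : vectType F) (d : nat)
    (G : 'X_{1..d} -> {vspace V}) (S : seq 'X_{1..d}) : {mpoly int[d]} :=
  \prod_(a <- S) (1 - 'X_[a]) ^+ (\dim (G a)).

Definition mlength (d : nat) (p : {mpoly int[d]}) : nat :=
  \sum_(m <- msupp p) absz (p@_m)%R.

Definition is_Z_grading (F : fieldType) (V : vectType F) (br : V -> V -> V)
    (k : nat) (G : nat -> {vspace V}) : Prop :=
  [/\ G 0%N = 0%VS,
      (forall j, (k < j)%N -> G j = 0%VS),
      (\sum_(1 <= i < k.+1) G i)%VS = fullv,
      directv (\sum_(1 <= i < k.+1) G i) &
      (forall i j (x y : V), x \in G i -> y \in G j -> br x y \in G (i + j)%N)].

Definition Zgrading_poly (F : fieldType) (V : vectType F) (k : nat)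
    (G : nat -> {vspace V}) : {poly int} :=
  \prod_(1 <= i < k.+1) (1 - 'X^i) ^+ (\dim (G i)).

Definition plength (p : {poly int}) : nat :=
  \sum_(i < size p) absz (p`_i)%R.

From HB Require Import structures.
From mathcomp Require Import all_boot all_order all_algebra.
From mathcomp Require Import mpoly zify.
Set Implicit Arguments. Unset Strict Implicit. Unset Printing Implicit Defensive.
Import GRing.Theory.
Local Open Scope ring_scope.

(* Kronecker substitution: for N larger than every exponent occurring in p,
   the weight w(a) = sum_i a_i N^i is additive, positive on nonzero a and
   injective on the monomials of p (base-N digits).  Regrouping the grading
   along w gives n'_j = sum_(w(a) = j) n_a, a Z_+-grading whose polynomial is
   p(t, t^N, ..., t^(N^(d-1))); since distinct monomials of p land on distinct
   powers of t, no coefficients merge and the length is unchanged.  Neither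
   nilpotency nor the characteristic plays a role. *)

Lemma big_partition_seq (R : Type) (idx : R) (op : Monoid.com_law idx)
    (I J : eqType) (s : seq I) (r : seq J) (f : I -> J) (F : I -> R) :
  uniq r -> {in s, forall a, f a \in r} ->
  \big[op/idx]_(j <- r) \big[op/idx]_(a <- s | f a == j) F a
    = \big[op/idx]_(a <- s) F a.
Proof.
move=> ur fr; under eq_bigr do rewrite big_mkcond.
rewrite exchange_big /=; apply: eq_big_seq => a aS.
rewrite (bigD1_seq (f a)) ?fr // eqxx big1 ?Monoid.mulm1 // => j /negbTE.
by rewrite eq_sym => ->.
Qed.

Lemma leq_sum_eq_in (I : eqType) (r : seq I) (f g : I -> nat) :
  {in r, forall i, f i <= g i}%N ->
  (\sum_(i <- r) g i <= \sum_(i <- r) f i)%N -> {in r, f =1 g}.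
Proof.
elim: r => [|a r IH] // fg; rewrite !big_cons => sum_le i.
have fga : (f a <= g a)%N by apply: fg; rewrite mem_head.
have fgr : {in r, forall i, f i <= g i}%N by move=> j jr; apply: fg; rewrite inE jr orbT.
have sum_fg : (\sum_(j <- r) f j <= \sum_(j <- r) g j)%N.
  by rewrite big_seq_cond [leqRHS]big_seq_cond; apply: leq_sum => j /andP[jr _]; exact: fgr.
have [ea er] : f a = g a /\ (\sum_(j <- r) g j <= \sum_(j <- r) f j)%N by lia.
by rewrite inE => /orP[/eqP-> // | ir]; apply: IH.
Qed.

Lemma absz_sum_single (I : eqType) (s : seq I) (P : pred I) (c : I -> int) :
  uniq s -> {in s &, forall i j, P i -> P j -> i = j} ->
  absz (\sum_(i <- s | P i) c i) = (\sum_(i <- s | P i) absz (c i))%N.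
Proof.
move=> us Ps; have [/hasP[i0 i0s Pi0] | noP] := boolP (has P s); last first.
  by rewrite !big_hasC.
have others (R : nmodType) (e : I -> R) :
    \sum_(i <- s | i != i0) (if P i then e i else 0) = 0.
  by rewrite big1_seq // => i /andP[/eqP ne si]; case: ifP => // Pi; case: ne; apply: Ps.
rewrite !(big_mkcond P) !(bigD1_seq i0) //= Pi0.
by rewrite others (others _ (fun i => absz (c i))) addr0 addn0.
Qed.

Lemma digits_inj (N n : nat) (f g : 'I_n -> nat) :
  (forall i, f i < N)%N -> (forall i, g i < N)%N ->
  (\sum_(i < n) f i * N ^ i = \sum_(i < n) g i * N ^ i)%N -> f =1 g.
Proof.
elim: n f g => [|n IH] f g fN gN; first by move=> _ [].
have N_gt0 : (0 < N)%N := leq_ltn_trans (leq0n _) (fN ord0).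
have shift h : (\sum_(i < n.+1) h i * N ^ i
                = h ord0 + N * \sum_(i < n) h (lift ord0 i) * N ^ i)%N.
  rewrite big_ord_recl expn0 muln1 big_distrr /=; congr (_ + _)%N.
  by apply: eq_bigr => i _; rewrite expnS mulnCA.
rewrite !shift => eq_sum.
have e0 : f ord0 = g ord0.
  move: (congr1 (modn^~ N) eq_sum).
  by rewrite /= !(addnC (_ ord0)) !(mulnC N) !modnMDl !modn_small.
move: eq_sum; rewrite e0 => /addnI /eqP; rewrite eqn_mul2l eqn0Ngt N_gt0 /=.
move=> /eqP /IH eq_lift i; have [j -> | ->] := unliftP ord0 i => //.
exact: eq_lift.
Qed.

Lemma plength_widen (q : {poly int}) M : (size q <= M)%N ->
  plength q = (\sum_(0 <= i < M) absz (q`_i)%R)%N.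
Proof.
move=> le_qM; rewrite /plength (big_cat_nat (leq0n (size q)) le_qM) /= big_mkord.
rewrite [X in (_ + X)%N]big1_seq ?addn0 // => i /andP[_].
by rewrite mem_index_iota => /andP[qi _]; rewrite nth_default.
Qed.

Section KroneckerSubstitution.
Variables (d N : nat).

Definition weight (m : 'X_{1..d}) : nat := (\sum_(i < d) m i * N ^ i)%N.

Lemma weightD m1 m2 : weight (m1 + m2)%MM = (weight m1 + weight m2)%N.
Proof. by rewrite -big_split; apply: eq_bigr => i _; rewrite mnmDE mulnDl. Qed.

Lemma weight_eq0 m : (0 < N)%N -> weight m = 0%N -> m = 0%MM.
Proof.
move=> N_gt0 /eqP; rewrite /weight sum_nat_eq0 => /forallP m0; apply/mnmP => i.
by move: (m0 i); rewrite muln_eq0 expn_eq0 mnm0E (gtn_eqF N_gt0) orbF => /eqP.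
Qed.

Lemma weight_inj (m1 m2 : 'X_{1..d}) :
  (forall i, m1 i < N)%N -> (forall i, m2 i < N)%N -> weight m1 = weight m2 -> m1 = m2.
Proof. by move=> m1N m2N /(digits_inj m1N m2N) eq12; apply/mnmP. Qed.

Definition kronecker (p : {mpoly int[d]}) : {poly int} :=
  mmap (@polyC int) (fun i => 'X^(N ^ i)) p.

Lemma kronecker_mmap1 m : mmap1 (fun i => 'X^(N ^ i)) m = 'X^(weight m) :> {poly int}.
Proof. by rewrite /mmap1 /weight -prodrXr; apply: eq_bigr => i _; rewrite -exprM mulnC. Qed.

Lemma kronecker_prod (I : Type) (s : seq I) (a : I -> 'X_{1..d}) (e : I -> nat) :
  kronecker (\prod_(i <- s) (1 - 'X_[a i]) ^+ e i)
    = \prod_(i <- s) (1 - 'X^(weight (a i))) ^+ e i.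
Proof.
rewrite /kronecker rmorph_prod; apply: eq_bigr => i _.
by rewrite rmorphXn rmorphB rmorph1 -kronecker_mmap1 -(mmapX _ (@polyC int)).
Qed.

Lemma coef_kronecker p j :
  (kronecker p)`_j = \sum_(m <- msupp p | weight m == j) p@_m.
Proof.
rewrite coef_sum [RHS]big_mkcond; apply: eq_bigr => m _.
by rewrite kronecker_mmap1 coefCM coefXn eq_sym; case: eqP; rewrite ?mulr1 ?mulr0.
Qed.

Lemma plength_kronecker p : (msize p <= N)%N -> plength (kronecker p) = mlength p.
Proof.
move=> pN.
have mN m : m \in msupp p -> forall i, (m i < N)%N.
  move=> mp i; apply: leq_trans pN; apply: leq_ltn_trans (msize_mdeg_lt mp).
  by rewrite mdegE (bigD1 i) //= leq_addr.
pose M := (size (kronecker p) + \sum_(m <- msupp p) (weight m).+1)%N.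
rewrite (@plength_widen _ M) ?leq_addr //.
have fiber_single j :
    {in msupp p &, forall m1 m2, weight m1 == j -> weight m2 == j -> m1 = m2}.
  by move=> m1 m2 m1p m2p /eqP <- /eqP /esym /weight_inj; apply; apply: mN.
under eq_bigr => j _ do
  rewrite coef_kronecker (absz_sum_single _ (msupp_uniq p) (fiber_single j)).
rewrite (big_partition_seq addn) ?iota_uniq // => m mp.
rewrite mem_index_iota leq0n /M (big_rem m) //= ltn_addl // ltnS leq_addr //.
Qed.

End KroneckerSubstitution.

Lemma memv_sum_ind (F : fieldType) (V : vectType F) (I : Type) (r : seq I)
    (P : pred I) (Us : I -> {vspace V}) (Q : V -> Prop) :
  Q 0 -> (forall x y, Q x -> Q y -> Q (x + y)) ->
  (forall i x, P i -> x \in Us i -> Q x) ->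
  forall x, x \in (\sum_(i <- r | P i) Us i)%VS -> Q x.
Proof.
move=> Q0 QD QU; apply: (big_ind (fun U : {vspace V} => forall x, x \in U -> Q x)).
- by move=> x; rewrite memv0 => /eqP ->.
- by move=> U W QU' QW x /memv_addP[u Uu [w Ww ->]]; apply: QD; [apply: QU' | apply: QW].
- by move=> i Pi x; apply: QU.
Qed.

Section LieBracket.
Variables (F : fieldType) (V : vectType F) (br : V -> V -> V).
Hypothesis br_lie : is_lie_bracket br.

Lemma lie_brDl x y z : br (x + y) z = br x z + br y z.
Proof. by case: br_lie => brZDl _ _ _; have := brZDl 1 x y z; rewrite !scale1r. Qed.

Lemma lie_brDr x y z : br x (y + z) = br x y + br x z.
Proof. by case: br_lie => _ brZDr _ _; have := brZDr 1 x y z; rewrite !scale1r. Qed.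

Lemma lie_br0l z : br 0 z = 0.
Proof. by apply/esym/(addrI (br 0 z)); rewrite addr0 -lie_brDl addr0. Qed.

Lemma lie_br0r z : br z 0 = 0.
Proof. by apply/esym/(addrI (br z 0)); rewrite addr0 -lie_brDr addr0. Qed.

Lemma memv_lie_sum (I J : Type) (r : seq I) (s : seq J) (P : pred I) (Q : pred J)
    (Us : I -> {vspace V}) (Ws : J -> {vspace V}) (W : {vspace V}) x y :
  (forall i j u w, P i -> Q j -> u \in Us i -> w \in Ws j -> br u w \in W) ->
  x \in (\sum_(i <- r | P i) Us i)%VS -> y \in (\sum_(j <- s | Q j) Ws j)%VS ->
  br x y \in W.
Proof.
move=> UW xU yW; move: x xU; apply: memv_sum_ind => [|x1 x2|i x Pi xU].
- by rewrite lie_br0l mem0v.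
- by rewrite lie_brDl; apply: memvD.
move: y yW; apply: memv_sum_ind => [|y1 y2|j y Qj yW].
- by rewrite lie_br0r mem0v.
- by rewrite lie_brDr; apply: memvD.
exact: UW xU yW.
Qed.

End LieBracket.

Section Coarsening.
Variables (F : fieldType) (V : vectType F) (br : V -> V -> V) (d k : nat).
Variables (G : 'X_{1..d} -> {vspace V}) (S : seq 'X_{1..d}) (l : 'X_{1..d} -> nat).
Hypothesis G_grading : is_Zd_grading br G S.
Hypothesis l_range : {in S, forall a, 0 < l a <= k}%N.

Definition coarsening (j : nat) : {vspace V} := (\sum_(a <- S | l a == j) G a)%VS.

Let l_iota : {in S, forall a, l a \in index_iota 1 k.+1}.
Proof. by move=> a /l_range; rewrite mem_index_iota ltnS. Qed.

Lemma sum_coarsening : (\sum_(1 <= j < k.+1) coarsening j)%VS = fullv.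
Proof.
by case: G_grading => _ _ <- _ _; rewrite (big_partition_seq addv _ _ l_iota) ?iota_uniq.
Qed.

Lemma dim_coarsening : {in index_iota 1 k.+1, forall j,
  \dim (coarsening j) = (\sum_(a <- S | l a == j) \dim (G a))%N}.
Proof.
have [_ _ G_full G_direct _] := G_grading.
apply: leq_sum_eq_in => [j _ | ]; first exact: dimv_leq_sum.
rewrite (big_partition_seq addn _ _ l_iota) ?iota_uniq //.
have <- : \dim (\sum_(a <- S) G a)%VS = (\sum_(a <- S) \dim (G a))%N.
  by move/directvP: G_direct.
by rewrite G_full -sum_coarsening dimv_leq_sum.
Qed.

Hypothesis l_additive : forall a b, l (a + b)%MM = (l a + l b)%N.

Lemma coarsening_grading : is_lie_bracket br -> is_Z_grading br k coarsening.
Proof.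
move=> br_lie; have [_ G0 G_full G_direct G_br] := G_grading.
split.
- by rewrite /coarsening big1_seq // => a /andP[/eqP la0 /l_range]; rewrite la0.
- move=> j lt_kj; rewrite /coarsening big1_seq // => a /andP[/eqP laj /l_range /andP[_]].
  by rewrite laj leqNgt lt_kj.
- exact: sum_coarsening.
- apply/directvP; rewrite /= sum_coarsening (eq_big_seq _ dim_coarsening).
  rewrite (big_partition_seq addn _ _ l_iota) ?iota_uniq // -G_full.
  by move/directvP: G_direct.
move=> i j x y; apply: memv_lie_sum => // a b u w /eqP <- /eqP <- Gu Gw.
rewrite -l_additive; have Guw := G_br _ _ _ _ Gu Gw.
have [abS | abNS] := boolP ((a + b)%MM \in S).
  by apply: subvP Guw; rewrite /coarsening (big_rem (a + b)%MM) //= eqxx addvSl.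
by move: Guw; rewrite G0 // memv0 => /eqP ->; apply: mem0v.
Qed.

Lemma coarsening_poly :
  Zgrading_poly k coarsening = \prod_(a <- S) (1 - 'X^(l a)) ^+ \dim (G a).
Proof.
rewrite /Zgrading_poly (eq_big_seq _ (fun j jk => congr1 _ (dim_coarsening jk))).
under eq_bigr do rewrite -prodrXr.
rewrite -(big_partition_seq *%R _ _ l_iota) ?iota_uniq //.
by apply: eq_bigr => j _; apply: eq_bigr => a /eqP ->.
Qed.

End Coarsening.

Theorem mainTheorem1 (F : fieldType) (V : vectType F) (br : V -> V -> V)
    (d : nat) (G : 'X_{1..d} -> {vspace V}) (S : seq 'X_{1..d}) :
  [pchar F] =i pred0 ->
  is_lie_bracket br ->
  lie_nilpotent br ->
  (1 <= d)%N ->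
  is_Zd_grading br G S ->
  exists (k : nat) (G' : nat -> {vspace V}),
    (0 < k)%N /\ is_Z_grading br k G' /\
    plength (Zgrading_poly k G') = mlength (grading_poly G S).
Proof.
move=> _ br_lie _ _ G_grading; have [/andP[_ S0] _ _ _ _] := G_grading.
pose N := (msize (grading_poly G S)).+1; pose l := @weight d N.
pose k := maxn 1 (\max_(a <- S) l a).
have l_range : {in S, forall a, 0 < l a <= k}%N.
  move=> a aS; rewrite leq_max (@leq_bigmax_seq _ S xpredT l a aS) // orbT andbT lt0n.
  by apply: contraNneq S0 => /(weight_eq0 (ltn0Sn _)) <-.
exists k, (coarsening G S l); split; first by rewrite leq_max.
split; first exact: coarsening_grading G_grading l_range (weightD N) br_lie.
rewrite (coarsening_poly G_grading l_range) -kronecker_prod.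
by apply: plength_kronecker; apply: leqnSn.
Qed.
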